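(* Every join-congruence uniform left modular lattice is join-extremal, and every meet-congruence uniform left modular lattice is meet-extremal. Moreover, a congruence uniform lattice is extremal if and only if it is left modular.
   Context: All lattices are finite. For a convex subset $C$ of a lattice $L$, let $I_L(C)=\{y\in L\mid\exists x\in C,\ y\le x\}$, and the doubling $L[C]$ is the subposet of $L\times\{0<1\}$ on $\big(I_L(C)\times\{0\}\big)\sqcup\big(((L\setminus I_L(C))\cup C)\times\{1\}\big)$. A lattice is join-congruence uniform (resp. meet-congruence uniform, congruence uniform) if it is obtained from the one-element lattice by successive doublings of nonempty lower pseudo-intervals (resp. upper pseudo-intervals, intervals); a lower (resp. upper) pseudo-interval is a convex union of intervals sharing the same minimum (resp. maximum). A lattice is join-extremal (resp. meet-extremal) if its length (maximum number of elements of a chain minus one) equals its number of join-irreducible (resp. meet-irreducible) elements, and extremal if both hold. An element $a$ is left modular if for all $b<c$, $(b\vee a)\wedge c=b\vee(a\wedge c)$; a lattice is left modular if it has a maximal chain of left modular elements. *)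

From HB Require Import structures.
From mathcomp Require Import all_boot all_order.
Set Implicit Arguments. Unset Strict Implicit. Unset Printing Implicit Defensive.
Import Order.Theory.
Local Open Scope order_scope.

Section GenericPoset.
Variables (T : finType) (le : rel T).

Definition convex (C : {set T}) : Prop :=
  forall x y z, x \in C -> z \in C -> le x y -> le y z -> y \in C.

Definition itv (a b : T) : {set T} := [set y | le a y && le y b].

(* C is an interval (nonemptiness is required separately) *)
Definition is_interval (C : {set T}) : Prop :=
  exists a b, le a b /\ C = itv a b.

Definition lower_pseudo_interval (C : {set T}) : Prop :=
  convex C /\ exists (m : T) (B : {set T}), C = \bigcup_(b in B) itv m b.

Definition upper_pseudo_interval (C : {set T}) : Prop :=
  convex C /\ exists (M : T) (A : {set T}), C = \bigcup_(a in A) itv a M.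

Definition downset (C : {set T}) : {set T} :=
  [set y | [exists x in C, le y x]].

(* the underlying set of the doubling L[C] inside L x {0<1} *)
Definition doubling_set (C : {set T}) : {set T * bool} :=
  [set p | if p.2 then (p.1 \notin downset C) || (p.1 \in C)
           else p.1 \in downset C].

Definition prod_le (p q : T * bool) : bool := le p.1 q.1 && (p.2 <= q.2)%N.

End GenericPoset.

Definition iso_doubling (S : finType) (leS : rel S)
    (T : finType) (leT : rel T) (C : {set T}) : Prop :=
  exists f : S -> T * bool,
    [/\ injective f,
        forall x, f x \in doubling_set leT C,
        forall p, p \in doubling_set leT C -> exists x, f x = p
      & forall x y, leS x y = prod_le leT (f x) (f y)].

Inductive doubling_closure
    (P : forall T : finType, rel T -> {set T} -> Prop) :
    forall S : finType, rel S -> Prop :=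
| dc_base (S : finType) (leS : rel S) :
    #|S| = 1 -> (forall x, leS x x) -> doubling_closure P leS
| dc_step (S : finType) (leS : rel S) (T : finType) (leT : rel T) (C : {set T}) :
    doubling_closure P leT -> C != set0 -> P T leT C ->
    iso_doubling leS leT C -> doubling_closure P leS.

Definition P_interval (T : finType) (le : rel T) (C : {set T}) : Prop :=
  is_interval le C.
Definition P_lower (T : finType) (le : rel T) (C : {set T}) : Prop :=
  lower_pseudo_interval le C.
Definition P_upper (T : finType) (le : rel T) (C : {set T}) : Prop :=
  upper_pseudo_interval le C.

Section Lattice.
Context {disp : Order.disp_t} {L : finTBLatticeType disp}.

Definition congruence_uniform : Prop :=
  doubling_closure P_interval (<=%O : rel L).
Definition join_congruence_uniform : Prop :=
  doubling_closure P_lower (<=%O : rel L).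
Definition meet_congruence_uniform : Prop :=
  doubling_closure P_upper (<=%O : rel L).

Definition join_irreducible (x : L) : bool :=
  (x != \bot) && [forall a : L, forall b : L, (a `|` b == x) ==> (a == x) || (b == x)].
Definition meet_irreducible (x : L) : bool :=
  (x != \top) && [forall a : L, forall b : L, (a `&` b == x) ==> (a == x) || (b == x)].

Definition is_chain (S : {set L}) : bool :=
  [forall x in S, forall y in S, (x <= y) || (y <= x)].

Definition lattice_length : nat :=
  (\max_(S : {set L} | is_chain S) #|S|)%N.-1.

Definition join_extremal : Prop :=
  lattice_length = #|[set x : L | join_irreducible x]|.
Definition meet_extremal : Prop :=
  lattice_length = #|[set x : L | meet_irreducible x]|.
Definition extremal : Prop := join_extremal /\ meet_extremal.

Definition left_modular_elt (a : L) : Prop :=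
  forall b c : L, b < c -> (b `|` a) `&` c = b `|` (a `&` c).

Definition left_modular : Prop :=
  exists S : {set L}, maxset is_chain S /\ forall a, a \in S -> left_modular_elt a.

End Lattice.

From mathcomp Require Import all_boot all_order.
Set Implicit Arguments. Unset Strict Implicit. Unset Printing Implicit Defensive.
Import Order.Theory.
Local Open Scope order_scope.

(* Fix a maximal chain [S] and send each join-irreducible [j] to the least
   element [s] of [S] above it; then [j] is not below the predecessor [t] of
   [s] in [S].  When [t] is left modular, [j] is minimal among the elements
   below [s] but not below [t], and join-semidistributivity shows that two
   such elements with the same [s] coincide.  So the join-irreducibles inject
   into [S] minus its bottom: there are at most as many as the length, and in
   any lattice there are at least as many.  Conversely, if the lattice is
   join-extremal, a longest chain makes this map bijective, each [j] is then
   minimal as above, and meet-semidistributivity turns this into left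
   modularity of every element of the chain.  Doubling a lower (upper)
   pseudo-interval preserves join- (meet-) semidistributivity, so the
   congruence-uniformity hypotheses provide the semidistributivity needed. *)

Section FiniteLattice.
Context {disp : Order.disp_t} {L : finTBLatticeType disp}.
Implicit Types (a b c j s t w x y z : L) (S : {set L}).

Definition join_semidistributive :=
  forall a b c : L, a `|` b = a `|` c -> a `|` (b `&` c) = a `|` b.
Definition meet_semidistributive :=
  forall a b c : L, a `&` b = a `&` c -> a `&` (b `|` c) = a `&` b.

Lemma ex_minimal (P : pred L) z : P z ->
  exists2 j, P j & forall w, w < j -> ~~ P w.
Proof.
move=> Pz; pose rank x := #|[set w : L | w < x]|.
have rank_lt x y : x < y -> (rank x < rank y)%N.
  move=> xy; apply/proper_card/properP; split.
    by apply/subsetP => w; rewrite !inE => /lt_trans; apply.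
  by exists x; rewrite !inE ?ltxx.
have [j Pj jmin] := arg_minnP rank Pz.
exists j => // w /rank_lt wj; apply: contraTN wj => /jmin.
by rewrite -leqNgt.
Qed.

Definition join_irreducibles : {set L} := [set x | join_irreducible x].

Lemma join_irreducible_neq0 j : join_irreducible j -> j != \bot.
Proof. by case/andP. Qed.

Lemma join_irreducible_join j a b :
  join_irreducible j -> a `|` b = j -> a = j \/ b = j.
Proof.
case/andP=> _ /forallP/(_ a)/forallP/(_ b)/implyP jJ abj.
by case/orP: (jJ (introT eqP abj)) => /eqP; [left | right].
Qed.

Lemma ex_join_irreducible_nle y z : ~~ (z <= y) -> exists j,
  [/\ join_irreducible j, j <= z, ~~ (j <= y) & forall w, w < j -> w <= y].
Proof.
move=> zy; pose P w := (w <= z) && ~~ (w <= y).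
have [|j /andP[jz jy] jmin] := @ex_minimal P z; first by rewrite /P lexx.
have below_y w : w < j -> w <= y.
  by move=> wj; move: (jmin w wj); rewrite negb_and negbK (le_trans (ltW wj) jz).
exists j; split => //; apply/andP; split.
  by apply: contraNneq jy => ->; rewrite le0x.
apply/forallP => a; apply/forallP => b; apply/implyP => /eqP abj.
apply: contraNT jy; rewrite negb_or => /andP[aj bj].
have aj' : a < j by rewrite lt_neqAle aj -abj leUl.
have bj' : b < j by rewrite lt_neqAle bj -abj leUr.
by rewrite -abj leUx !below_y.
Qed.

Lemma chainP S : reflect {in S &, forall x y, (x <= y) || (y <= x)} (is_chain S).
Proof.
apply: (iffP forall_inP) => [chS x y xS yS | chS x xS].
  exact: (forall_inP (chS x xS)).
by apply/forall_inP => y; apply: chS.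
Qed.

Lemma card_chain_le S : is_chain S -> (#|S| <= #|join_irreducibles|.+1)%N.
Proof.
move=> /chainP chS; pose rank s := #|[set j in join_irreducibles | j <= s]|.
have rank_lt s t : s < t -> (rank s < rank t)%N.
  move=> st; apply/proper_card/properP; split.
    by apply/subsetP => j; rewrite !inE => /andP[-> /le_trans]; apply; apply: ltW.
  have [j [jJ jt jns _]] := ex_join_irreducible_nle (negbT (lt_geF st)).
  by exists j; rewrite !inE ?jJ ?jt.
rewrite cardE -(size_map rank) -[_.+1](size_iota 0); apply: uniq_leq_size.
  rewrite map_inj_in_uniq ?enum_uniq // => s t; rewrite !mem_enum => sS tS est.
  by case/orP: (chS s t sS tS); rewrite le_eqVlt => /orP[/eqP //|/rank_lt];
    rewrite est ltnn.
move=> _ /mapP[s _ ->]; rewrite mem_iota ltnS.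
by apply: subset_leq_card; apply/subsetP => j; rewrite inE => /andP[].
Qed.

Lemma length_le_card_join_irreducibles : (@lattice_length _ L <= #|join_irreducibles|)%N.
Proof.
rewrite /lattice_length -subn1 leq_subLR add1n.
by apply/bigmax_leqP => S; apply: card_chain_le.
Qed.

Lemma card_chain_le_length S : is_chain S -> (#|S|.-1 <= @lattice_length _ L)%N.
Proof. by move=> chS; rewrite /lattice_length -!subn1 leq_sub2r // leq_bigmax_cond. Qed.

Lemma ex_chain_of_length :
  exists2 S : {set L}, maxset is_chain S & @lattice_length _ L = #|S|.-1.
Proof.
have [|S chS Smax] :=
  @eq_bigmax_cond _ [pred X : {set L} | is_chain X] (fun X => #|X|).
  by apply/card_gt0P; exists set0; rewrite inE; apply/chainP => x; rewrite inE.
rewrite inE in chS; have {}Smax : (\max_(X : {set L} | is_chain X) #|X|)%N = #|S|.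
  by rewrite -Smax; apply: eq_bigl => X; rewrite inE.
exists S; last by rewrite /lattice_length Smax.
apply/maxsetP; split => // X chX SX; apply/eqP; rewrite eq_sym eqEcard SX -Smax.
exact: leq_bigmax_cond.
Qed.

(** * Labelling a maximal chain by join-irreducible elements *)

Section MaximalChain.
Variable S : {set L}.
Hypothesis maxS : maxset is_chain S.

Let chainS : {in S &, forall x y, (x <= y) || (y <= x)}.
Proof. exact/chainP/(maxsetp maxS). Qed.

Lemma maxchain_mem w : {in S, forall s, (s <= w) || (w <= s)} -> w \in S.
Proof.
move=> wS; have chwS : is_chain (w |: S).
  apply/chainP => x y; rewrite !inE.
  case/orP=> [/eqP->|xS]; case/orP=> [/eqP->|yS]; rewrite ?lexx ?wS //.
  - by rewrite orbC wS.
  - exact: chainS.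
by rewrite -(maxsetsup maxS chwS (subsetUr _ _)) setU11.
Qed.

Lemma maxchain_bot : \bot \in S.
Proof. by apply: maxchain_mem => s _; rewrite le0x orbT. Qed.

Lemma maxchain_top : \top \in S.
Proof. by apply: maxchain_mem => s _; rewrite lex1. Qed.

Definition chain_pred s := \join_(r in S | r < s) r.
Definition chain_ceil x := \meet_(s in S | x <= s) s.

Lemma chain_ceil_mem x : chain_ceil x \in S.
Proof.
rewrite /chain_ceil; elim/big_ind: _ => [|s s' sS s'S|s /andP[] //].
  exact: maxchain_top.
by case/orP: (chainS sS s'S) => ss'; rewrite ?(meet_l ss') ?(meet_r ss').
Qed.

Lemma le_chain_ceil x : x <= chain_ceil x.
Proof. by apply/meetsP => s /andP[]. Qed.

Lemma chain_ceil_le x s : s \in S -> x <= s -> chain_ceil x <= s.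
Proof. by move=> sS xs; apply: meets_inf; rewrite sS. Qed.

Lemma chain_pred_mem_lt s : \bot < s -> (chain_pred s \in S) && (chain_pred s < s).
Proof.
move=> s0; rewrite /chain_pred; elim/big_ind: _ => [|r r'|r //].
- by rewrite maxchain_bot.
- move=> /andP[rS rs] /andP[r'S r's].
  by case/orP: (chainS rS r'S) => rr'; rewrite ?(join_l rr') ?(join_r rr') ?rS ?r'S.
Qed.

Lemma le_chain_pred r s : r \in S -> r < s -> r <= chain_pred s.
Proof. by move=> rS rs; apply: joins_sup; rewrite rS. Qed.

Lemma chain_pred_cover s w : s \in S -> \bot < s ->
  chain_pred s <= w -> w <= s -> w = chain_pred s \/ w = s.
Proof.
move=> sS s0 tw ws; case: (eqVneq w s) => [|ns]; [by right | left].
have wS : w \in S.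
  apply: maxchain_mem => r rS; case/orP: (chainS rS sS) => [rs|sr].
    case: (eqVneq r s) => [->|rns]; first by rewrite ws orbT.
    by rewrite (le_trans (le_chain_pred rS _) tw) // lt_neqAle rns.
  by rewrite (le_trans ws sr) orbT.
by apply/le_anti; rewrite tw le_chain_pred // lt_neqAle ns.
Qed.

Lemma chain_ceil_gt0 x : x != \bot -> \bot < chain_ceil x.
Proof.
by move=> x0; rewrite lt0x; apply: contraNneq x0 => c0; rewrite -lex0 -c0 le_chain_ceil.
Qed.

Lemma chain_ceil_nle_pred x : x != \bot -> ~~ (x <= chain_pred (chain_ceil x)).
Proof.
move=> /chain_ceil_gt0/chain_pred_mem_lt/andP[tS tc].
by apply: contraTN tc => /chain_ceil_le-/(_ tS) ct; rewrite le_gtF.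
Qed.

Lemma chain_ceil_eq x s :
  s \in S -> \bot < s -> x <= s -> ~~ (x <= chain_pred s) -> chain_ceil x = s.
Proof.
move=> sS s0 xs xt; apply/le_anti; rewrite chain_ceil_le //=.
case/orP: (chainS (chain_ceil_mem x) sS) => [cs|//].
case: (eqVneq (chain_ceil x) s) => [-> //|ns].
have ct : chain_ceil x <= chain_pred s.
  by rewrite le_chain_pred ?chain_ceil_mem // lt_neqAle ns.
by rewrite (le_trans (le_chain_ceil x) ct) in xt.
Qed.

(* [j] labels the cover [chain_pred s < s] of [S], where [s = chain_ceil j]:
   it is minimal among the elements below [s] but not below [chain_pred s]. *)
Definition chain_label j := forall w, w < j -> w <= chain_pred (chain_ceil j).

Lemma join_chain_pred_ceil x : x != \bot ->
  chain_pred (chain_ceil x) `|` x = chain_ceil x.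
Proof.
move=> x0; have c0 := chain_ceil_gt0 x0.
have [_ /ltW tc] := andP (chain_pred_mem_lt c0).
have txc : chain_pred (chain_ceil x) `|` x <= chain_ceil x.
  by rewrite leUx tc le_chain_ceil.
have [e|//] := chain_pred_cover (chain_ceil_mem x) c0 (leUl _ x) txc.
by move: (chain_ceil_nle_pred x0); rewrite -e leUr.
Qed.

Lemma left_modular_chain_label j : join_irreducible j ->
  left_modular_elt (chain_pred (chain_ceil j)) -> chain_label j.
Proof.
move=> jJ lmt w wj; have j0 := join_irreducible_neq0 jJ.
have c0 := chain_ceil_gt0 j0; have js := le_chain_ceil j.
have [_ /ltW tc] := andP (chain_pred_mem_lt c0).
have wtc : w `|` chain_pred (chain_ceil j) <= chain_ceil j.
  by rewrite leUx tc (le_trans (ltW wj) js).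
have [e|wt_c] := chain_pred_cover (chain_ceil_mem j) c0 (leUr _ w) wtc.
  by rewrite -e leUl.
have := lmt w j wj; rewrite wt_c (meet_r js).
case/esym/(join_irreducible_join jJ) => [wj_eq|tj_eq].
  by move: wj; rewrite wj_eq ltxx.
by move: (chain_ceil_nle_pred j0); rewrite -{1}tj_eq leIl.
Qed.

Lemma chain_label_inj j j' : join_semidistributive ->
  join_irreducible j -> join_irreducible j' -> chain_label j -> chain_label j' ->
  chain_ceil j = chain_ceil j' -> j = j'.
Proof.
move=> jsd jJ j'J lj lj' e; have j0 := join_irreducible_neq0 jJ.
have [_ tc] := andP (chain_pred_mem_lt (chain_ceil_gt0 j0)).
case: (eqVneq j j') => // nj; exfalso.
have jj't : j `&` j' <= chain_pred (chain_ceil j).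
  case: (eqVneq (j `&` j') j) => [jj'|jj'].
    2: by apply: lj; rewrite lt_neqAle jj' leIl.
  have /lj' : j < j' by rewrite lt_neqAle nj -jj' leIr.
  by rewrite -e => jt; move: (chain_ceil_nle_pred j0); rewrite jt.
have tj' : chain_pred (chain_ceil j) `|` j' = chain_ceil j.
  by rewrite e join_chain_pred_ceil ?join_irreducible_neq0.
have := jsd _ _ _ (etrans (join_chain_pred_ceil j0) (esym tj')).
by rewrite (join_l jj't) join_chain_pred_ceil // => ce; move: tc; rewrite ce ltxx.
Qed.

Lemma ex_chain_label s : s \in S -> \bot < s ->
  exists2 j, join_irreducible j & chain_ceil j = s /\ chain_label j.
Proof.
move=> sS s0; have [_ ts] := andP (chain_pred_mem_lt s0).
have [j [jJ js jt jmin]] := ex_join_irreducible_nle (negbT (lt_geF ts)).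
have cj : chain_ceil j = s by apply: chain_ceil_eq.
by exists j => //; split => // w; rewrite cj; apply: jmin.
Qed.

Lemma chain_ceil_onto : chain_ceil @: join_irreducibles = S :\ \bot.
Proof.
apply/setP => s; apply/imsetP/idP => [[j + ->] | ].
  rewrite inE => jJ.
  by rewrite !inE chain_ceil_mem andbT -lt0x chain_ceil_gt0 ?join_irreducible_neq0.
rewrite !inE -lt0x => /andP[s0 sS]; have [j jJ [cj _]] := ex_chain_label sS s0.
by exists j; rewrite ?inE.
Qed.

Lemma join_extremal_of_chain_labels : join_semidistributive ->
  (forall j, join_irreducible j -> chain_label j) -> @join_extremal _ L.
Proof.
move=> jsd lab; rewrite /join_extremal -/join_irreducibles.
have inj : {in join_irreducibles &, injective chain_ceil}.
  move=> j j'; rewrite !inE => jJ j'J.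
  exact: chain_label_inj jsd jJ j'J (lab _ jJ) (lab _ j'J).
apply/eqP; rewrite eqn_leq length_le_card_join_irreducibles /=.
apply: leq_trans (card_chain_le_length (maxsetp maxS)).
by rewrite -(card_in_imset inj) chain_ceil_onto (cardsD1 \bot S) maxchain_bot.
Qed.

Lemma chain_label_of_inj : {in join_irreducibles &, injective chain_ceil} ->
  forall j, join_irreducible j -> chain_label j.
Proof.
move=> inj j jJ; have j0 := join_irreducible_neq0 jJ.
have [j' j'J [cj' lj']] := ex_chain_label (chain_ceil_mem j) (chain_ceil_gt0 j0).
by rewrite -(inj j' j) ?inE.
Qed.

Lemma left_modular_of_chain_labels : meet_semidistributive ->
  (forall j, join_irreducible j -> chain_label j) ->
  {in S, forall x, left_modular_elt x}.
Proof.
move=> msd lab x xS b c bc.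
set y := b `|` (x `&` c); set z := (b `|` x) `&` c.
have yz : y <= z.
  by rewrite leUx !lexI leUl ltW //= leIr andbT (le_trans (leIl _ _) (leUr _ _)).
apply/le_anti; rewrite yz andbT; apply: contraT => nzy.
(* A minimal [j] below [z] but not below [y] labels a cover of [S] above [x];
   meet-semidistributivity then puts [j] below [y]. *)
have [j [jJ jz jy jmin]] := ex_join_irreducible_nle nzy.
have j0 := join_irreducible_neq0 jJ; have js := le_chain_ceil j.
have jx : ~~ (j <= x).
  apply: contra jy => jx; rewrite /y (le_trans _ (leUr _ b)) //.
  by rewrite lexI jx (le_trans jz) // leIr.
have xt : x <= chain_pred (chain_ceil j).
  case/orP: (chainS xS (chain_ceil_mem j)) => [xc|cx].
    2: by rewrite (le_trans js cx) in jx.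
  apply: le_chain_pred => //; rewrite lt_neqAle xc andbT.
  by apply: contraNneq jx => ->.
have jyt : j `&` y = j `&` chain_pred (chain_ceil j).
  apply/le_anti; rewrite !lexI !leIl /=.
  rewrite lab ?jmin // lt_neqAle eq_meetl ?leIl ?andbT //.
  exact: chain_ceil_nle_pred.
have j_yt : j <= y `|` chain_pred (chain_ceil j).
  apply: (le_trans jz); apply: (le_trans (leIl _ _)).
  by rewrite leUx (le_trans (leUl _ _) (leUl y _)) (le_trans xt (leUr _ y)).
have := msd _ _ _ jyt; rewrite (meet_l j_yt) => jE.
by move: jy; rewrite jE leIr.
Qed.

End MaximalChain.

Theorem join_extremal_of_left_modular :
  join_semidistributive -> @left_modular _ L -> @join_extremal _ L.
Proof.
move=> jsd [S [maxS lmS]]; apply: (join_extremal_of_chain_labels maxS jsd) => j jJ.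
apply: left_modular_chain_label => //; apply: lmS.
by case/andP: (chain_pred_mem_lt maxS (chain_ceil_gt0 S (join_irreducible_neq0 jJ))).
Qed.

Theorem left_modular_of_join_extremal :
  meet_semidistributive -> @join_extremal _ L -> @left_modular _ L.
Proof.
move=> msd ext; have [S maxS lenS] := ex_chain_of_length.
exists S; split => //; apply: left_modular_of_chain_labels => //.
apply: chain_label_of_inj => //; apply/imset_injP.
by rewrite chain_ceil_onto // /join_irreducibles -ext lenS (cardsD1 \bot S) maxchain_bot.
Qed.

End FiniteLattice.

Section Duality.
Context {disp : Order.disp_t} {L : finTBLatticeType disp}.

Lemma join_semidistributive_dual :
  @meet_semidistributive _ L -> @join_semidistributive _ L^d.
Proof. by []. Qed.

Lemma is_chain_dual (S : {set L}) : @is_chain _ L^d S = is_chain S.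
Proof.
by apply/chainP/chainP => chS x y xS yS; rewrite orbC; apply: chS.
Qed.

Lemma meet_extremal_dual : @join_extremal _ L^d -> @meet_extremal _ L.
Proof.
rewrite /join_extremal /meet_extremal.
suff -> : @lattice_length _ L^d = @lattice_length _ L by [].
by congr _.-1; apply: eq_bigl => S; rewrite is_chain_dual.
Qed.

Lemma left_modular_dual : @left_modular _ L -> @left_modular _ L^d.
Proof.
case=> S [maxS lmS]; exists S; split; first by rewrite (maxset_eq S is_chain_dual).
move=> a aS b c cb; have := lmS a aS c b cb.
rewrite !joinEdual !meetEdual => lm.
by rewrite [in RHS](@meetC _ L) (@joinC _ L a) lm (@joinC _ L) (@meetC _ L).
Qed.

End Duality.

Theorem meet_extremal_of_left_modular {disp : Order.disp_t} {L : finTBLatticeType disp} :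
  @meet_semidistributive _ L -> @left_modular _ L -> @meet_extremal _ L.
Proof.
move=> /join_semidistributive_dual msd /left_modular_dual lm.
exact/meet_extremal_dual/join_extremal_of_left_modular.
Qed.

(** * Lattices given by an order relation *)

(* The doubling [L[C]] is a subset of [T * bool] ordered by [prod_le] rather
   than a lattice structure, so lattice notions are stated for a relation
   restricted to a domain [D]. *)

Section Relations.
Variables (X : finType) (D : {pred X}) (le : rel X).

Definition partial_order := [/\ reflexive le, antisymmetric le & transitive le].

Definition is_lub x y j :=
  [/\ j \in D, le x j, le y j & forall u, u \in D -> le x u -> le y u -> le j u].
Definition is_glb x y m :=
  [/\ m \in D, le m x, le m y & forall u, u \in D -> le u x -> le u y -> le u m].

Definition lattice_on :=
  {in D &, forall x y, exists j, is_lub x y j} /\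
  {in D &, forall x y, exists m, is_glb x y m}.

Definition join_semidistributive_on := forall a b c j m,
  a \in D -> b \in D -> c \in D ->
  is_lub a b j -> is_lub a c j -> is_glb b c m -> is_lub a m j.
Definition meet_semidistributive_on := forall a b c j m,
  a \in D -> b \in D -> c \in D ->
  is_glb a b m -> is_glb a c m -> is_lub b c j -> is_glb a j m.

Lemma is_lub_uniq x y j j' :
  antisymmetric le -> is_lub x y j -> is_lub x y j' -> j = j'.
Proof.
move=> anti [jD xj yj jmin] [j'D xj' yj' j'min].
by apply: anti; rewrite jmin ?j'min.
Qed.

Lemma is_glb_uniq x y m m' :
  antisymmetric le -> is_glb x y m -> is_glb x y m' -> m = m'.
Proof.
move=> anti [mD mx my mmax] [m'D m'x m'y m'max].
by apply: anti; rewrite mmax ?m'max.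
Qed.

End Relations.

Section OrderEmbedding.
Variables (Y X : finType) (D : {pred X}) (leY : rel Y) (leX : rel X) (f : Y -> X).
Hypotheses (fD : forall y, f y \in D) (f_onto : forall x, x \in D -> exists y, f y = x)
  (f_mono : forall a b, leY a b = leX (f a) (f b)).

Lemma partial_order_embed : injective f -> partial_order leX -> partial_order leY.
Proof.
move=> finj [refl anti trans]; split.
- by move=> x; rewrite f_mono.
- by move=> x y; rewrite !f_mono => /anti/finj.
- by move=> y x z; rewrite !f_mono; apply: trans.
Qed.

Lemma is_lub_embed a b j : is_lub predT leY a b j <-> is_lub D leX (f a) (f b) (f j).
Proof.
rewrite /is_lub !f_mono; split=> -[_ aj bj jmin]; split; rewrite ?fD //.
  by move=> _ /f_onto[u <-]; rewrite -!f_mono; apply: jmin.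
by move=> u _; rewrite !f_mono; apply: jmin.
Qed.

Lemma is_glb_embed a b m : is_glb predT leY a b m <-> is_glb D leX (f a) (f b) (f m).
Proof.
rewrite /is_glb !f_mono; split=> -[_ ma mb mmax]; split; rewrite ?fD //.
  by move=> _ /f_onto[u <-]; rewrite -!f_mono; apply: mmax.
by move=> u _; rewrite !f_mono; apply: mmax.
Qed.

Lemma lattice_on_embed : lattice_on D leX -> lattice_on predT leY.
Proof.
case=> lub glb; split=> x y _ _.
  have [_ /[dup] [[/f_onto[j <-] _ _ _]]] := lub _ _ (fD x) (fD y).
  by move=> /is_lub_embed; exists j.
have [_ /[dup] [[/f_onto[m <-] _ _ _]]] := glb _ _ (fD x) (fD y).
by move=> /is_glb_embed; exists m.
Qed.

Lemma join_semidistributive_embed :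
  join_semidistributive_on D leX -> join_semidistributive_on predT leY.
Proof.
move=> jsd a b c j m _ _ _ /is_lub_embed abj /is_lub_embed acj /is_glb_embed bcm.
exact/is_lub_embed/(jsd _ _ _ _ _ (fD a) (fD b) (fD c) abj acj bcm).
Qed.

Lemma meet_semidistributive_embed :
  meet_semidistributive_on D leX -> meet_semidistributive_on predT leY.
Proof.
move=> msd a b c j m _ _ _ /is_glb_embed abm /is_glb_embed acm /is_lub_embed bcj.
exact/is_glb_embed/(msd _ _ _ _ _ (fD a) (fD b) (fD c) abm acm bcj).
Qed.

End OrderEmbedding.

(** * Doubling preserves semidistributivity *)

Section Doubling.
Variables (T : finType) (le : rel T) (C : {set T}).
Hypotheses (le_po : partial_order le) (convexC : convex le C).
Local Notation I := (downset le C).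
Local Notation D := (doubling_set le C).

Let leT_refl : reflexive le. Proof. by case: le_po. Qed.
Let leT_trans : transitive le. Proof. by case: le_po. Qed.

Lemma in_doubling_set x b :
  ((x, b) \in D) = if b then (x \notin I) || (x \in C) else x \in I.
Proof. by rewrite inE. Qed.

Lemma downset_le x y : le x y -> y \in I -> x \in I.
Proof.
move=> xy; rewrite !inE => /existsP[c /andP[cC yc]].
by apply/existsP; exists c; rewrite cC (leT_trans xy).
Qed.

Lemma mem_downset x : x \in C -> x \in I.
Proof. by move=> xC; rewrite inE; apply/existsP; exists x; rewrite xC leT_refl. Qed.

Lemma convex_downset x y : x \in C -> le x y -> y \in I -> y \in C.
Proof.
by move=> xC xy; rewrite inE => /existsP[c /andP[cC yc]]; apply: convexC xC cC xy yc.
Qed.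

Lemma doubling_top_mem x y : (x, true) \in D -> le x y -> y \in I -> x \in C.
Proof.
move=> xD xy yI; move: xD; rewrite in_doubling_set.
by rewrite (downset_le xy yI).
Qed.

Lemma partial_order_prod_le : partial_order (prod_le le).
Proof.
case: le_po => refl anti trans; split.
- by case=> x a; rewrite /prod_le refl leqnn.
- case=> x a [y b]; rewrite /prod_le /= => /andP[/andP[xy ab] /andP[yx ba]].
  by rewrite (anti x y) ?xy //; case: a b ab ba => [] [].
- case=> y b [x a] [z c]; rewrite /prod_le /= => /andP[xy ab] /andP[yz bc].
  by rewrite (trans y) ?(leq_trans ab bc).
Qed.

Lemma doubling_is_lub x y a b p : is_lub predT le x y p ->
  (x, a) \in D -> (y, b) \in D ->
  is_lub D (prod_le le) (x, a) (y, b) (p, [|| a, b | p \notin I]).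
Proof.
case=> _ xp yp pmin xD yD; split.
- rewrite in_doubling_set; case: (boolP (p \in I)) => pI; rewrite ?orbT //= orbF.
  case: a xD => xD /=; first exact: convex_downset (doubling_top_mem xD xp pI) xp pI.
  by case: b yD => yD //=; exact: convex_downset (doubling_top_mem yD yp pI) yp pI.
- by rewrite /prod_le /= xp; case: a xD; case: b yD.
- by rewrite /prod_le /= yp; case: a xD; case: b yD.
- case=> r e rD; rewrite /prod_le /= => /andP[xr ar] /andP[yr br].
  rewrite (pmin r) //=; case: e rD ar br => [_ _ _|]; first exact: leq_b1.
  rewrite in_doubling_set => rI; case: a xD; case: b yD => //= _ _ _ _.
  by rewrite (downset_le (pmin r isT xr yr) rI).
Qed.

Lemma doubling_is_glb x y a b q : is_glb predT le x y q ->
  (x, a) \in D -> (y, b) \in D ->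
  is_glb D (prod_le le) (x, a) (y, b) (q, [&& a, b & (q \notin I) || (q \in C)]).
Proof.
case=> _ qx qy qmax xD yD; split.
- rewrite in_doubling_set.
  case: a xD => /=; last by rewrite in_doubling_set => /(downset_le qx).
  case: b yD => /=; last by rewrite in_doubling_set => /(downset_le qy).
  by move=> _ _; case: ifP => // /negbT; rewrite negb_or negbK => /andP[].
- by rewrite /prod_le /= qx; case: a xD; case: b yD => //= *; exact: leq_b1.
- by rewrite /prod_le /= qy; case: a xD; case: b yD => //= *; exact: leq_b1.
- case=> r e rD; rewrite /prod_le /= => /andP[rx ra] /andP[ry rb].
  have rq := qmax r isT rx ry; rewrite rq /=.
  case: e rD ra rb => //=; rewrite in_doubling_set.
  case: a xD; case: b yD => //= _ _ rD _ _.
  case: (boolP (q \in I)) => //= qI.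
  by rewrite (downset_le rq qI) /= in rD; rewrite (convex_downset rD rq qI).
Qed.

Lemma lattice_on_doubling : lattice_on predT le -> lattice_on D (prod_le le).
Proof.
case=> lub glb; split=> -[x a] [y b] xD yD.
  have [p xyp] := lub x y isT isT.
  by exists (p, [|| a, b | p \notin I]); apply: doubling_is_lub.
have [q xyq] := glb x y isT isT.
by exists (q, [&& a, b & (q \notin I) || (q \in C)]); apply: doubling_is_glb.
Qed.

Lemma doubling_lubE x y a b j : lattice_on predT le ->
  (x, a) \in D -> (y, b) \in D -> is_lub D (prod_le le) (x, a) (y, b) j ->
  exists2 p, is_lub predT le x y p & j = (p, [|| a, b | p \notin I]).
Proof.
case=> lub _ xD yD xyj; have [p xyp] := lub x y isT isT; exists p => //.
by apply: is_lub_uniq xyj (doubling_is_lub xyp xD yD); case: partial_order_prod_le.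
Qed.

Lemma doubling_glbE x y a b m : lattice_on predT le ->
  (x, a) \in D -> (y, b) \in D -> is_glb D (prod_le le) (x, a) (y, b) m ->
  exists2 q, is_glb predT le x y q & m = (q, [&& a, b & (q \notin I) || (q \in C)]).
Proof.
case=> _ glb xD yD xym; have [q xyq] := glb x y isT isT; exists q => //.
by apply: is_glb_uniq xym (doubling_is_glb xyq xD yD); case: partial_order_prod_le.
Qed.

Lemma lower_pseudo_interval_glb m (B : {set T}) y z q :
  C = \bigcup_(b in B) itv le m b -> y \in C -> z \in C ->
  is_glb predT le y z q -> q \in C.
Proof.
move=> eC yC zC [_ qy _ qmax].
have /bigcupP[b1 b1B] : y \in \bigcup_(b in B) itv le m b by rewrite -eC.
have /bigcupP[b2 _] : z \in \bigcup_(b in B) itv le m b by rewrite -eC.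
rewrite !inE => /andP[mz _] /andP[my yb1].
have mC : m \in C.
  by rewrite eC; apply/bigcupP; exists b1; rewrite // inE leT_refl (leT_trans my).
exact: convexC mC yC (qmax m isT my mz) qy.
Qed.

Lemma upper_pseudo_interval_lub M (A : {set T}) y z p :
  C = \bigcup_(a in A) itv le a M -> y \in I -> z \in I ->
  is_lub predT le y z p -> p \in I.
Proof.
move=> eC yI zI [_ _ _ pmin].
have below_M w : w \in I -> le w M /\ M \in C.
  rewrite inE => /existsP[c /andP[cC wc]].
  have /bigcupP[a aA] : c \in \bigcup_(a in A) itv le a M by rewrite -eC.
  rewrite inE => /andP[ac cM]; split; first exact: leT_trans cM.
  by rewrite eC; apply/bigcupP; exists a; rewrite // inE leT_refl (leT_trans ac).
have [yM MC] := below_M y yI; have [zM _] := below_M z zI.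
exact: downset_le (pmin M isT yM zM) (mem_downset MC).
Qed.

Lemma join_semidistributive_doubling m (B : {set T}) :
  C = \bigcup_(b in B) itv le m b -> lattice_on predT le ->
  join_semidistributive_on predT le -> join_semidistributive_on D (prod_le le).
Proof.
move=> eC lat jsd [x a] [y b] [z c] j k xD yD zD abj acj bck.
have [p xyp ej] := doubling_lubE lat xD yD abj.
have [p' xzp ej'] := doubling_lubE lat xD zD acj.
have [q yzq ek] := doubling_glbE lat yD zD bck.
rewrite ej in ej'; case: ej' => pp' flags; subst p' j k.
have [qD _ _ _] := bck.
suff -> : [|| a, b | p \notin I] =
          [|| a, [&& b, c & (q \notin I) || (q \in C)] | p \notin I].
  exact: doubling_is_lub (jsd _ _ _ _ _ isT isT isT xyp xzp yzq) xD qD.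
move: flags; case: (boolP (p \in I)) => pI /=; rewrite ?orbT ?orbF //.
case: (a) => //= bc; rewrite -bc in zD *; case: (b) yD zD => //= yD zD.
have [_ _ yp _] := xyp; have [_ _ zp _] := xzp.
have yC := doubling_top_mem yD yp pI; have zC := doubling_top_mem zD zp pI.
by rewrite (lower_pseudo_interval_glb eC yC zC yzq) orbT.
Qed.

Lemma meet_semidistributive_doubling M (A : {set T}) :
  C = \bigcup_(a in A) itv le a M -> lattice_on predT le ->
  meet_semidistributive_on predT le -> meet_semidistributive_on D (prod_le le).
Proof.
move=> eC lat msd [x a] [y b] [z c] j m xD yD zD abm acm bcj.
have [q xyq em] := doubling_glbE lat xD yD abm.
have [q' xzq em'] := doubling_glbE lat xD zD acm.
have [p yzp ej] := doubling_lubE lat yD zD bcj.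
rewrite em in em'; case: em' => qq' flags; subst q' m j.
have [pD _ _ _] := bcj.
suff -> : [&& a, b & (q \notin I) || (q \in C)] =
          [&& a, [|| b, c | p \notin I] & (q \notin I) || (q \in C)].
  exact: doubling_is_glb (msd _ _ _ _ _ isT isT isT xyq xzq yzp) xD pD.
move: flags; case: ((q \notin I) || (q \in C)); rewrite ?andbF ?andbT //.
case: (a) => //= bc; rewrite -bc in zD *; case: (b) yD zD => //= yD zD.
by rewrite !in_doubling_set in yD zD; rewrite (upper_pseudo_interval_lub eC yD zD yzp).
Qed.

End Doubling.

Lemma one_element_lattice (S : finType) (le : rel S) : #|S| = 1 -> reflexive le ->
  [/\ partial_order le, lattice_on predT le, join_semidistributive_on predT le
     & meet_semidistributive_on predT le].
Proof.
move=> S1 refl; have eqS (x y : S) : x = y.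
  by have /fintype_le1P := eq_leq S1; apply.
have lub x y : is_lub predT le x y x by rewrite (eqS y x); split=> // u _.
have glb x y : is_glb predT le x y x by rewrite (eqS y x); split=> // u _.
split=> //.
- by split=> // y x z _ _; rewrite (eqS x z).
- by split=> x y _ _; [exists x | exists x].
- by move=> a b c j m *; rewrite (eqS j a).
- by move=> a b c j m *; rewrite (eqS m a).
Qed.

Lemma convex_itv (T : finType) (le : rel T) a b :
  partial_order le -> convex le (itv le a b).
Proof.
case=> _ _ trans x y z; rewrite !inE => /andP[ax _] /andP[_ zb] xy yz.
by rewrite (trans x) // (trans z).
Qed.

Lemma doubling_step (S T : finType) (leS : rel S) (leT : rel T) (C : {set T}) :
  partial_order leT -> lattice_on predT leT -> convex leT C -> iso_doubling leS leT C ->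
  partial_order leS /\ lattice_on predT leS.
Proof.
move=> po lat cvx [f [finj fD f_onto f_mono]]; split.
- exact: partial_order_embed f_mono finj (partial_order_prod_le po).
- exact: lattice_on_embed fD f_onto f_mono (lattice_on_doubling po cvx lat).
Qed.

Lemma lower_doubling_closure_join_semidistributive (S : finType) (leS : rel S) :
  doubling_closure P_lower leS ->
  [/\ partial_order leS, lattice_on predT leS & join_semidistributive_on predT leS].
Proof.
elim=> [S0 le0 S1 refl | S0 le0 T leT C _ [po lat jsd] _ [cvx [m [B eC]]] iso].
  by case: (one_element_lattice S1 refl).
have [po' lat'] := doubling_step po lat cvx iso; split=> //.
case: iso => f [_ fD f_onto f_mono].
exact: join_semidistributive_embed fD f_onto f_mono
  (join_semidistributive_doubling po cvx eC lat jsd).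
Qed.

Lemma upper_doubling_closure_meet_semidistributive (S : finType) (leS : rel S) :
  doubling_closure P_upper leS ->
  [/\ partial_order leS, lattice_on predT leS & meet_semidistributive_on predT leS].
Proof.
elim=> [S0 le0 S1 refl | S0 le0 T leT C _ [po lat msd] _ [cvx [M [A eC]]] iso].
  by case: (one_element_lattice S1 refl).
have [po' lat'] := doubling_step po lat cvx iso; split=> //.
case: iso => f [_ fD f_onto f_mono].
exact: meet_semidistributive_embed fD f_onto f_mono
  (meet_semidistributive_doubling po cvx eC lat msd).
Qed.

Lemma interval_doubling_closure_semidistributive (S : finType) (leS : rel S) :
  doubling_closure P_interval leS ->
  [/\ partial_order leS, lattice_on predT leS, join_semidistributive_on predT leS
     & meet_semidistributive_on predT leS].
Proof.
elim=> [S0 le0 S1 refl | S0 le0 T leT C _ [po lat jsd msd] _ [a [b [_ eC]]] iso].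
  exact: one_element_lattice S1 refl.
have cvx : convex leT C by rewrite eC; apply: convex_itv.
have [po' lat'] := doubling_step po lat cvx iso.
case: iso => f [_ fD f_onto f_mono]; split=> //.
- have eCl : C = \bigcup_(x in [set b]) itv leT a x by rewrite big_set1.
  exact: join_semidistributive_embed fD f_onto f_mono
    (join_semidistributive_doubling po cvx eCl lat jsd).
- have eCu : C = \bigcup_(x in [set a]) itv leT x b by rewrite big_set1.
  exact: meet_semidistributive_embed fD f_onto f_mono
    (meet_semidistributive_doubling po cvx eCu lat msd).
Qed.

Section LatticeRelations.
Context {disp : Order.disp_t} {L : finTBLatticeType disp}.

Lemma is_lub_join (a b : L) : is_lub predT <=%O a b (a `|` b).
Proof. by split; rewrite //= ?leUl ?leUr // => u _ au bu; rewrite leUx au. Qed.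

Lemma is_glb_meet (a b : L) : is_glb predT <=%O a b (a `&` b).
Proof. by split; rewrite //= ?leIl ?leIr // => u _ ua ub; rewrite lexI ua. Qed.

Lemma join_semidistributive_of_rel :
  join_semidistributive_on predT (<=%O : rel L) -> @join_semidistributive _ L.
Proof.
move=> jsd a b c abc; have acj : is_lub predT <=%O a c (a `|` b).
  by rewrite abc; apply: is_lub_join.
have := jsd _ _ _ _ _ isT isT isT (is_lub_join a b) acj (is_glb_meet b c).
by apply: is_lub_uniq (is_lub_join _ _) => x y /le_anti.
Qed.

Lemma meet_semidistributive_of_rel :
  meet_semidistributive_on predT (<=%O : rel L) -> @meet_semidistributive _ L.
Proof.
move=> msd a b c abc; have acm : is_glb predT <=%O a c (a `&` b).
  by rewrite abc; apply: is_glb_meet.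
have := msd _ _ _ _ _ isT isT isT (is_glb_meet a b) acm (is_lub_join b c).
by apply: is_glb_uniq (is_glb_meet _ _) => x y /le_anti.
Qed.

Lemma join_congruence_uniform_semidistributive :
  @join_congruence_uniform _ L -> @join_semidistributive _ L.
Proof.
by case/lower_doubling_closure_join_semidistributive => _ _ /join_semidistributive_of_rel.
Qed.

Lemma meet_congruence_uniform_semidistributive :
  @meet_congruence_uniform _ L -> @meet_semidistributive _ L.
Proof.
by case/upper_doubling_closure_meet_semidistributive => _ _ /meet_semidistributive_of_rel.
Qed.

Lemma congruence_uniform_semidistributive :
  @congruence_uniform _ L -> @join_semidistributive _ L /\ @meet_semidistributive _ L.
Proof.
case/interval_doubling_closure_semidistributive => _ _ jsd msd.
by split; [apply: join_semidistributive_of_rel | apply: meet_semidistributive_of_rel].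
Qed.

End LatticeRelations.

Theorem corollary3p22 (d : Order.disp_t) (L : finTBLatticeType d) :
  (@join_congruence_uniform d L -> @left_modular d L -> @join_extremal d L) /\
  (@meet_congruence_uniform d L -> @left_modular d L -> @meet_extremal d L) /\
  (@congruence_uniform d L -> (@extremal d L <-> @left_modular d L)).
Proof.
split; [|split].
- move/join_congruence_uniform_semidistributive.
  exact: join_extremal_of_left_modular.
- move/meet_congruence_uniform_semidistributive.
  exact: meet_extremal_of_left_modular.
- case/congruence_uniform_semidistributive => jsd msd; split.
    by case=> ext _; apply: left_modular_of_join_extremal.
  move=> lm; split; first exact: join_extremal_of_left_modular.
  exact: meet_extremal_of_left_modular.
Qed.
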